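(* Suppose there exist two orthogonal designs of order $n$ and type $(s_1,\ldots,s_u)$ (in the same variables) that are unbiased with parameter $\alpha$. Then for any nonempty subset $S\subseteq\{1,\ldots,u\}$ there exist two weighing matrices that are quasi-unbiased for the parameters $\left(n,\sum_{i\in S}s_i,\alpha,(\sum_{i\in S}s_i)^2/\alpha\right)$.
   Context: A weighing matrix of order $n$ and weight $k$ is an $n\times n$ $(0,1,-1)$-matrix $W$ with $WW^\top=kI_n$. An orthogonal design of order $n$ and type $(s_1,\ldots,s_u)$ in distinct commuting real indeterminates $x_1,\ldots,x_u$ is an $n\times n$ matrix $D$ with entries in $\{0,\pm x_1,\ldots,\pm x_u\}$ such that $DD^\top=(s_1x_1^2+\cdots+s_ux_u^2)I_n$. Two such designs $D_1,D_2$ are unbiased with parameter $\alpha$ if $\alpha>0$ and there is a $(0,1,-1)$-matrix $W$ with $D_1D_2^\top=\frac{s_1x_1^2+\cdots+s_ux_u^2}{\sqrt\alpha}W$. Weighing matrices $W_1,W_2$ of order $n$ and weight $k$ are quasi-unbiased for parameters $(n,k,l,a)$ if $\frac1{\sqrt a}W_1W_2^\top$ is a weighing matrix of order $n$ and weight $l$. *)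

From HB Require Import structures.
From mathcomp Require Import all_boot all_order all_algebra.
From mathcomp Require Import mpoly.
Set Implicit Arguments. Unset Strict Implicit. Unset Printing Implicit Defensive.
Import Order.TTheory GRing.Theory Num.Theory.
Local Open Scope ring_scope.

Definition pm1_matrix (R : numFieldType) (n : nat) (W : 'M[R]_n) : Prop :=
  forall i j, W i j \in [:: 0; 1; -1].

Definition is_weighing (R : numFieldType) (n : nat) (k : R) (W : 'M[R]_n) : Prop :=
  pm1_matrix W /\ W *m W^T = k%:M.

Definition quasi_unbiased (R : rcfType) (n : nat) (k l a : R)
  (W1 W2 : 'M[R]_n) : Prop :=
  is_weighing k W1 /\ is_weighing k W2 /\
  is_weighing l ((Num.sqrt a)^-1 *: (W1 *m W2^T)).

Definition od_entry (R : rcfType) (u : nat) (e : {mpoly R[u]}) : bool :=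
  (e == 0) || [exists i : 'I_u, (e == 'X_i) || (e == - 'X_i)].

Definition od_form (R : rcfType) (u : nat) (s : 'I_u -> nat) : {mpoly R[u]} :=
  \sum_(i < u) (s i)%:R *: ('X_i ^+ 2).

Definition is_orth_design (R : rcfType) (n u : nat) (s : 'I_u -> nat)
  (D : 'M[{mpoly R[u]}]_n) : Prop :=
  (forall i j, od_entry (D i j)) /\ D *m D^T = (od_form R s)%:M.

Definition unbiased_od (R : rcfType) (n u : nat) (s : 'I_u -> nat) (alpha : R)
  (D1 D2 : 'M[{mpoly R[u]}]_n) : Prop :=
  0 < alpha /\
  exists W : 'M[R]_n, pm1_matrix W /\
    D1 *m D2^T = \matrix_(i, j) (od_form R s * ((Num.sqrt alpha)^-1 * W i j)%:MP).

(* Substituting x_i := 1 for i in S and x_i := 0 otherwise turns both designs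
   into weighing matrices A1, A2 of weight k = sum_(i in S) s_i, and turns the
   unbiasedness relation into A1 A2^T = (k / sqrt alpha) W.  Since A2^T is a
   right inverse of A2 / k, it is also a left one, so A1 A2^T (A1 A2^T)^T = k^2,
   whence W W^T = alpha. *)
From HB Require Import structures.
From mathcomp Require Import all_boot all_order all_algebra.
From mathcomp Require Import mpoly.
Set Implicit Arguments. Unset Strict Implicit. Unset Printing Implicit Defensive.
Import Order.TTheory GRing.Theory Num.Theory.
Local Open Scope ring_scope.

Section WeighingProducts.

Variables (F : fieldType) (n : nat) (k : F).
Hypothesis k_neq0 : k != 0.

Lemma trmx_mulmx_scalar (A : 'M[F]_n) : A *m A^T = k%:M -> A^T *m A = k%:M.
Proof.
move=> AAt.
have rinvA : A *m (k^-1 *: A^T) = 1%:M.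
  by rewrite -scalemxAr AAt scale_scalar_mx mulVf.
have := mulmx1C rinvA; rewrite -scalemxAl => linvA.
by rewrite -[A^T *m A]scale1r -(mulfV k_neq0) -scalerA linvA scale_scalar_mx mulr1.
Qed.

Lemma mulmx_tr_weighing (A1 A2 : 'M[F]_n) :
  A1 *m A1^T = k%:M -> A2 *m A2^T = k%:M ->
  (A1 *m A2^T) *m (A1 *m A2^T)^T = (k ^+ 2)%:M.
Proof.
move=> A1A1t A2A2t; have A2tA2 := trmx_mulmx_scalar A2A2t.
rewrite trmx_mul trmxK mulmxA -(mulmxA A1) A2tA2 mul_mx_scalar -scalemxAl A1A1t.
by rewrite scale_scalar_mx expr2.
Qed.

Lemma scaled_gram (c : F) (W : 'M[F]_n) :
  c != 0 -> (c *: W) *m (c *: W)^T = k%:M -> W *m W^T = (k / c ^+ 2)%:M.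
Proof.
move=> c_neq0; rewrite linearZ /= -scalemxAl -scalemxAr scalerA -expr2 => cWW.
have c2_neq0 : c ^+ 2 != 0 by rewrite expf_neq0.
rewrite -[W *m W^T]scale1r -(mulVf c2_neq0) -scalerA cWW scale_scalar_mx.
by rewrite mulrC.
Qed.

End WeighingProducts.

Section Evaluation.

Variables (R : rcfType) (u : nat) (v : 'I_u -> R).
Hypothesis v_pm1 : forall i, v i \in [:: 0; 1; -1].

Lemma meval_od_entry (e : {mpoly R[u]}) :
  od_entry e -> meval v e \in [:: 0; 1; -1].
Proof.
case/orP => [/eqP-> | /existsP [i /orP [] /eqP->]].
- by rewrite meval0 !inE eqxx.
- by rewrite mevalXU v_pm1.
- rewrite mevalN mevalXU !inE.
  by have := v_pm1 i; rewrite !inE => /or3P [] /eqP->;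
    rewrite ?oppr0 ?opprK eqxx ?orbT.
Qed.

Lemma weighing_meval_orth_design (n : nat) (s : 'I_u -> nat)
    (D : 'M[{mpoly R[u]}]_n) :
  is_orth_design s D -> is_weighing (meval v (od_form R s)) (map_mx (meval v) D).
Proof.
move=> [D_entries DDt]; split=> [i j | ]; first by rewrite mxE meval_od_entry.
by rewrite map_trmx -map_mxM DDt map_scalar_mx.
Qed.

End Evaluation.

Lemma meval_od_form_indicator (R : rcfType) (u : nat) (s : 'I_u -> nat)
    (S : {set 'I_u}) :
  meval (fun i => (i \in S)%:R) (od_form R s) = (\sum_(i in S) s i)%N%:R.
Proof.
rewrite /od_form raddf_sum natr_sum [RHS]big_mkcond /=.
apply: eq_bigr => i _; rewrite mevalZ rmorphXn /= mevalXU.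
by case: (i \in S); rewrite ?expr1n ?mulr1 ?expr0n ?mulr0.
Qed.

Lemma sqrtr_sqr_div (R : rcfType) (k a : R) :
  0 <= k -> 0 < a -> Num.sqrt (k ^+ 2 / a) = k / Num.sqrt a.
Proof.
move=> k_ge0 a_gt0.
by rewrite sqrtrM ?sqr_ge0 // sqrtr_sqr ger0_norm // sqrtrV ?ltW.
Qed.

Theorem proposition3p3 (R : rcfType) (n u : nat) (s : 'I_u -> nat)
  (s_pos : forall i, (0 < s i)%N) (alpha : R)
  (D1 D2 : 'M[{mpoly R[u]}]_n) :
  is_orth_design s D1 -> is_orth_design s D2 -> unbiased_od s alpha D1 D2 ->
  forall S : {set 'I_u}, S != set0 ->
  exists W1 W2 : 'M[R]_n,
    quasi_unbiased ((\sum_(i in S) s i)%N%:R) alpha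
      ((\sum_(i in S) s i)%N%:R ^+ 2 / alpha) W1 W2.
Proof.
move=> OD1 OD2 [alpha_gt0 [W [W_pm1 D1D2t]]] S /set0Pn [j jS].
pose v i : R := (i \in S)%:R.
have v_pm1 i : v i \in [:: 0; 1; -1] by rewrite /v; case: (i \in S); rewrite !inE eqxx ?orbT.
set k : R := (\sum_(i in S) s i)%N%:R.
have k_gt0 : 0 < k by rewrite ltr0n (bigD1 j) //= ltn_addr.
have k_neq0 : k != 0 by rewrite gt_eqF.
have sqrt_gt0 : 0 < Num.sqrt alpha by rewrite sqrtr_gt0.
set c := k / Num.sqrt alpha.
have c_neq0 : c != 0 by rewrite mulf_neq0 ?invr_eq0 ?gt_eqF.
have [A1_pm1 A1A1t] := weighing_meval_orth_design v_pm1 OD1.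
have [A2_pm1 A2A2t] := weighing_meval_orth_design v_pm1 OD2.
rewrite meval_od_form_indicator -/k in A1A1t A2A2t.
set A1 := map_mx (meval v) D1 in A1_pm1 A1A1t *.
set A2 := map_mx (meval v) D2 in A2_pm1 A2A2t *.
have A1A2t : A1 *m A2^T = c *: W.
  apply/matrixP => i l; rewrite map_trmx -map_mxM D1D2t !mxE rmorphM /= mevalC.
  by rewrite meval_od_form_indicator mulrA.
exists A1, A2; split; first by []; split; first by [].
rewrite sqrtr_sqr_div ?ltW // A1A2t scalerA mulVf // scale1r; split=> //.
have := mulmx_tr_weighing k_neq0 A1A1t A2A2t; rewrite A1A2t.
move/(scaled_gram c_neq0) => ->.
by rewrite expr_div_n sqr_sqrtr ?ltW // invf_div mulrC divfK // expf_neq0.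
Qed.
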